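(* Let $n,p$ be positive integers with $D=n-p\ge1$, let $g:\{0,1\}^p\to\{0,1\}$ be a Boolean function whose algebraic normal form contains only non-linear terms, and define $f:\{0,1\}^n\to\{0,1\}^D$ by $f(\mathbf{x})=\mathbf{y}$ with $y_i=x_i+g(x_{i+1},\dots,x_{i+p})$ for $1\le i\le D$. If $\mathbf{x}$ is uniformly distributed on $\{0,1\}^n$, then $f(\mathbf{x})$ is uniformly distributed on $\{0,1\}^D$.
   Context: $+$ denotes addition over $GF(2)$ (XOR). ''Only non-linear terms'' means every monomial of the algebraic normal form of $g$ is a product of at least two input variables. *)

From mathcomp Require Import all_boot all_order all_algebra.
Set Implicit Arguments. Unset Strict Implicit. Unset Printing Implicit Defensive.

(* A Boolean function g : {0,1}^p -> {0,1} (inputs as p-tuples of bools,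
   true = 1, addition over GF(2) = xor = addb) whose algebraic normal form
   contains only non-linear terms: g is the GF(2)-sum of monomials
   prod_{i in S} x_i with coefficients a S, where a S = 0 whenever |S| <= 1
   (no constant term, no degree-1 terms).  Since the ANF is unique, this
   existential form determines the ANF of g. *)
Definition anf_only_nonlinear (p : nat) (g : p.-tuple bool -> bool) : Prop :=
  exists a : {set 'I_p} -> bool,
    (forall S : {set 'I_p}, #|S| <= 1 -> a S = false) /\
    (forall x : p.-tuple bool,
       g x = \big[addb/false]_(S : {set 'I_p}) (a S && [forall i in S, tnth x i])).

(* f : {0,1}^n -> {0,1}^(n-p), y_i = x_i + g(x_{i+1}, ..., x_{i+p}),
   using 0-based indices: for 0 <= i < n - p,
   y_i = x_i xor g(x_{i+1}, ..., x_{i+p}) (the largest index used is n-1). *)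
Definition shift_map (n p : nat) (g : p.-tuple bool -> bool)
    (x : n.-tuple bool) : (n - p).-tuple bool :=
  [tuple addb (nth false x i) (g [tuple nth false x (i + 1 + j) | j < p])
   | i < n - p].

Definition push_uniform_prob (n p : nat) (g : p.-tuple bool -> bool)
    (y : (n - p).-tuple bool) : rat :=
  (#|[set x : n.-tuple bool | shift_map g x == y]|%:R / (2 ^ n)%:R)%R.

From mathcomp Require Import all_boot all_order all_algebra.
From mathcomp Require Import ring zify.

Set Implicit Arguments.
Unset Strict Implicit.
Unset Printing Implicit Defensive.

(* Since y_i = x_i + g(x_(i+1), ..., x_(i+p)), the bits of x can be recovered
   from y and the last p bits of x by back-substitution, from x_(n-1) down to
   x_0.  Hence x |-> (f x, last p bits of x) is a bijection
   {0,1}^n -> {0,1}^(n-p) * {0,1}^p, and every fibre of f has 2^p elements. *)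

Lemma card_fibre_fst (aT bT cT : finType) (f : aT -> bT * cT) :
  injective f -> #|aT| = #|bT| * #|cT| ->
  forall b, #|[set x | (f x).1 == b]| = #|cT|.
Proof.
move=> injf cardA b.
have bijf : bijective f by apply: inj_card_bij; rewrite // card_prod cardA.
have -> : [set x | (f x).1 == b] = f @^-1: setX [set b] setT.
  by apply/setP => x; rewrite !inE andbT.
by rewrite (on_card_preimset (onW_bij _ bijf)) cardsX cards1 cardsT mul1n.
Qed.

Section ShiftMap.
Variables (n p : nat) (g : p.-tuple bool -> bool).

Definition tuple_suffix (x : n.-tuple bool) : p.-tuple bool :=
  [tuple nth false x (n - p + j) | j < p].

Lemma shift_map_suffix_inj :
  p <= n -> injective (fun x => (shift_map g x, tuple_suffix x)).
Proof.
move=> le_pn x x' eq_pair.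
have eq_f : shift_map g x = shift_map g x' := congr1 fst eq_pair.
have eq_suffix : tuple_suffix x = tuple_suffix x' := congr1 snd eq_pair.
(* Downward induction; indices i >= n hold trivially since nth defaults to false. *)
have eq_from : forall k i, n - k <= i -> nth false x i = nth false x' i.
  elim=> [|k IHk] i le_i.
    by rewrite !nth_default ?size_tuple // -(subn0 n).
  have [|lt_i] := leqP (n - k) i; first exact: IHk.
  have [le_np_i|lt_i_np] := leqP (n - p) i.
    have lt_j : i - (n - p) < p by lia.
    have := congr1 (fun t => tnth t (Ordinal lt_j)) eq_suffix.
    by rewrite !tnth_mktuple /= subnKC.
  have := congr1 (fun t => tnth t (Ordinal lt_i_np)) eq_f.
  rewrite !tnth_mktuple /=.
  have -> : [tuple nth false x (i + 1 + j) | j < p] =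
            [tuple nth false x' (i + 1 + j) | j < p].
    by apply: eq_mktuple => j; apply: IHk; lia.
  by move/addIb.
apply: val_inj; apply: (@eq_from_nth _ false); first by rewrite !size_tuple.
by move=> i _; apply: (eq_from n); rewrite subnn.
Qed.

Lemma card_shift_map_fibre (y : (n - p).-tuple bool) :
  p <= n -> #|[set x : n.-tuple bool | shift_map g x == y]| = 2 ^ p.
Proof.
move=> le_pn.
have card_split :
    #|{: n.-tuple bool}| = #|{: (n - p).-tuple bool}| * #|{: p.-tuple bool}|.
  by rewrite !card_tuple card_bool -expnD subnK.
have := card_fibre_fst (shift_map_suffix_inj le_pn) card_split y.
by rewrite card_tuple card_bool.
Qed.

End ShiftMap.

Theorem mainTheorem6 (n p : nat) (g : p.-tuple bool -> bool) :
  0 < n -> 0 < p -> 1 <= n - p ->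
  anf_only_nonlinear g ->
  forall y : (n - p).-tuple bool,
    push_uniform_prob g y = (1 / (2 ^ (n - p))%:R)%R.
Proof.
move=> _ _ lt_pn _ y.
have le_pn : p <= n by lia.
rewrite /push_uniform_prob card_shift_map_fibre //.
rewrite -{1}(subnK le_pn) expnD GRing.natrM.
have pow2_neq0 k : ((2 ^ k)%:R : rat) != 0%R.
  by rewrite Num.Theory.pnatr_eq0 expn_eq0.
by field; rewrite !pow2_neq0.
Qed.
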